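(* Let $\Bbbk$ be a field and let $\mathscr{C}$ be a Möbius category. Let $C$ be its incidence coalgebra: the $\Bbbk$-vector space with basis the set of arrows of $\mathscr{C}$, with $\Delta(f)=\sum_{(a,b):\,b\circ a=f}a\otimes b$ and $\epsilon(f)=1$ if $f$ is an identity arrow and $\epsilon(f)=0$ otherwise. For an arrow $f$ let $\ell(f)$ be the maximal $k$ such that $f=a_k\circ\cdots\circ a_1$ with all $a_i$ non-identity arrows ($\ell(f)=0$ for identities), let $C_n$ be the span of the arrows $f$ with $\ell(f)\le n$, and $C(n)$ the span of the arrows with $\ell(f)=n$. Then: $C_0\subset C_1\subset\cdots$ is a coalgebra filtration of $C$ (i.e. $\bigcup_n C_n=C$ and $\Delta(C_n)\subset\sum_{i+j=n}C_i\otimes C_j$); $C_n=C_{n-1}\oplus C(n)$ with $C(n)\subset\operatorname{Ker}\epsilon$ for $n\geq1$; $C_0$ is spanned by the identity arrows, which are group-like; and for every arrow $f:x\to y$ with $\ell(f)=n$, the projections of $\Delta(f)$ onto $C(0)\otimes C(n)$ and $C(n)\otimes C(0)$ are $\operatorname{id}_x\otimes f$ and $f\otimes\operatorname{id}_y$ respectively. In other words, the incidence coalgebra satisfies Hypothesis II (with the arrows as combinatorial elements, $\operatorname{in}(f)=\operatorname{id}_x$ and $\operatorname{out}(f)=\operatorname{id}_y$).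
   Context: A Möbius category (in the sense of Leroux) is a category in which every arrow $f$ admits only finitely many factorisations $f=a_k\circ\cdots\circ a_1$ ($k\ge0$) into non-identity arrows $a_i$ (the empty factorisation, $k=0$, only for identities). An element $x\ne0$ of a coalgebra is group-like if $\Delta(x)=x\otimes x$. Hypothesis II for a coalgebra $C$ means: $C$ is filtered, with chosen complements $C(n)\subset\operatorname{Ker}\epsilon$ ($n\ge1$), $C(0)=C_0$, and has a basis of homogeneous ''combinatorial elements'' closed under comultiplication, such that for every combinatorial element $f$ of degree $n$ the $(0,n)$- and $(n,0)$-components of $\Delta(f)$ are $\operatorname{in}(f)\otimes f$ and $f\otimes\operatorname{out}(f)$ with $\operatorname{in}(f),\operatorname{out}(f)$ group-like combinatorial elements. *)

From HB Require Import structures.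
From mathcomp Require Import all_boot all_order all_algebra.
From mathcomp Require Import finmap.
From mathcomp Require Import boolp.
Set Implicit Arguments. Unset Strict Implicit. Unset Printing Implicit Defensive.
Import GRing.Theory.
Local Open Scope ring_scope.

(* A (small) category: objects, arrows, source/target, identities and a
   composition [comp g f] = g \o f, meaningful when [tgt f = src g]. *)
Record category := Category {
  Obj : Type;
  Arr : choiceType;
  src : Arr -> Obj;
  tgt : Arr -> Obj;
  idc : Obj -> Arr;
  comp : Arr -> Arr -> Arr;
  src_id : forall x, src (idc x) = x;
  tgt_id : forall x, tgt (idc x) = x;
  src_comp : forall f g, tgt f = src g -> src (comp g f) = src f;
  tgt_comp : forall f g, tgt f = src g -> tgt (comp g f) = tgt g;
  comp_id_r : forall f, comp f (idc (src f)) = f;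
  comp_id_l : forall f, comp (idc (tgt f)) f = f;
  compA : forall f g h, tgt f = src g -> tgt g = src h ->
    comp h (comp g f) = comp (comp h g) f
}.

Section Defs.
Variable C : category.
Local Notation A := (Arr C).

Definition is_id (f : A) : Prop := exists x, f = idc x.

Fixpoint chain (s : seq A) : Prop :=
  match s with
  | a :: ((b :: _) as t) => tgt a = src b /\ chain t
  | _ => True
  end.

(* composite a_k \o ... \o a_1 of the list [:: a_1; ...; a_k] (k >= 1) *)
Definition composite (a : A) (t : seq A) : A := foldl (fun acc b => comp b acc) a t.

Definition factorisation (f : A) (s : seq A) : Prop :=
  (forall a, a \in s -> ~ is_id a) /\
  match s with
  | [::] => is_id f
  | a :: t => chain s /\ composite a t = f
  end.

(* Leroux's Moebius condition: finitely many factorisations of every arrow *)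
Definition moebius : Prop :=
  forall f : A, exists L : seq (seq A), forall s, factorisation f s -> s \in L.

(* l(f) <= n  (l(f) = maximal length of a factorisation) *)
Definition len_le (f : A) (n : nat) : Prop :=
  forall s, factorisation f s -> (size s <= n)%N.

Definition len_eq (f : A) (n : nat) : Prop :=
  len_le f n /\ exists s, factorisation f s /\ size s = n.

Variable k : fieldType.

(* The incidence coalgebra C = k-vector space with basis the arrows, realised
   as finitely supported functions A -> k (coefficient of each arrow).
   C (x) C has basis the pairs (a,b) = a (x) b, realised as finitely
   supported functions A * A -> k. *)
Definition vec := {fsfun A -> k with 0}.
Definition vec2 := {fsfun (A * A)%type -> k with 0}.

Definition basis (f : A) : A -> k := fun a => if a == f then 1 else 0.

(* comultiplication, coefficientwise: Delta(v) = sum_f v(f) sum_{b o a = f} a (x) b,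
   so the coefficient of a (x) b is v(b o a) if a, b are composable, else 0 *)
Definition Delta (v : A -> k) : A * A -> k :=
  fun p => if `[< tgt p.1 = src p.2 >] then v (comp p.2 p.1) else 0.

Definition eps (v : vec) : k :=
  \sum_(f <- finsupp v) v f * (if `[< is_id f >] then 1 else 0).

Definition inCle (v : vec) (n : nat) : Prop := forall f, v f != 0 -> len_le f n.
Definition inCeq (v : vec) (n : nat) : Prop := forall f, v f != 0 -> len_eq f n.

Definition proj (i j : nat) (w : A * A -> k) : A * A -> k :=
  fun p => if `[< len_eq p.1 i /\ len_eq p.2 j >] then w p else 0.

End Defs.

(* In a Moebius category the factorisations of an arrow have bounded length, so
   l(f) is a genuine maximum.  Concatenating factorisations of a and b yields one
   of b \o a, hence l(a) + l(b) <= l(b \o a): this gives the coalgebra filtration.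
   An identity has only the empty factorisation (a non-empty one could be repeated
   indefinitely), so b \o a is an identity only if a and b are: this gives the
   group-like identities and the (0,n)- and (n,0)-components of Delta(f). *)
From Pilot Require Import Defs.
From HB Require Import structures.
From mathcomp Require Import all_boot all_order all_algebra.
From mathcomp Require Import finmap.
From mathcomp Require Import boolp.
From mathcomp Require Import zify.
(* Re-import so that [comp] is the composition of [category], not [ssrfun.comp]. *)
Import Defs.
Set Implicit Arguments. Unset Strict Implicit. Unset Printing Implicit Defensive.
Import GRing.Theory.
Local Open Scope ring_scope.

Section Factorisations.
Variable C : category.
Implicit Types (x y : Obj C) (a b c f : Arr C) (s t : seq (Arr C)).

Lemma comp_idc_r y b : tgt (idc y) = src b -> comp b (idc y) = b.
Proof. by rewrite tgt_id => ->; exact: comp_id_r. Qed.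

Lemma comp_idc_l a y : tgt a = src (idc y) -> comp (idc y) a = a.
Proof. by rewrite src_id => <-; exact: comp_id_l. Qed.

Lemma comp_idcc x : comp (idc x) (idc x) = idc x.
Proof. by rewrite comp_idc_r ?src_id ?tgt_id. Qed.

Lemma chain_cons2 a b t : chain [:: a, b & t] <-> tgt a = src b /\ chain (b :: t).
Proof. by case: t. Qed.

Lemma chain_retarget b c t : chain (b :: t) -> tgt c = tgt b -> chain (c :: t).
Proof. by case: t => // d t /chain_cons2 [Ebd Ht] Ec; apply/chain_cons2; rewrite Ec. Qed.

Lemma chain_cat a b t1 t2 : chain (a :: t1) -> chain (b :: t2) ->
  tgt (last a t1) = src b -> chain (a :: t1 ++ b :: t2).
Proof.
elim: t1 a => [|c t1 IH] a /=; first by [].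
by move=> /chain_cons2 [Eac Hc] Hb El; apply/chain_cons2; split => //; apply: IH.
Qed.

Lemma src_tgt_composite a t : chain (a :: t) ->
  src (composite a t) = src a /\ tgt (composite a t) = tgt (last a t).
Proof.
elim: t a => [|b t IH] a // /chain_cons2 [Eab Hc].
have Hc' : chain (comp b a :: t) by apply: (chain_retarget Hc); rewrite tgt_comp.
have [-> ->] := IH _ Hc'.
by rewrite src_comp //; case: t {IH Hc Hc'} => //=; rewrite tgt_comp.
Qed.

Lemma composite_comp b c t : chain (b :: t) -> tgt c = src b ->
  composite (comp b c) t = comp (composite b t) c.
Proof.
elim: t b => [|d t IH] b // /chain_cons2 [Ebd Hc] Ecb.
change (composite (comp d (comp b c)) t = comp (composite (comp d b) t) c).
rewrite compA // IH //; first by apply: (chain_retarget Hc); rewrite tgt_comp.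
by rewrite src_comp.
Qed.

Lemma factorisation_nil f : is_id f -> factorisation f [::].
Proof. by split. Qed.

Lemma factorisation1 f : ~ is_id f -> factorisation f [:: f].
Proof. by move=> Nf; split=> // a; rewrite inE => /eqP ->. Qed.

Lemma exists_factorisation f : exists s, factorisation f s.
Proof.
have [/factorisation_nil|/factorisation1] := pselect (is_id f); by eexists; eauto.
Qed.

Lemma factorisation_cat a b sa sb : factorisation a sa -> factorisation b sb ->
  tgt a = src b -> factorisation (comp b a) (sa ++ sb).
Proof.
case: sa => [|a1 ta] Fa Fb Eab.
  by case: Fa => _ [y Ea]; subst a; rewrite comp_idc_r.
case: sb Fb => [|b1 tb] Fb.
  by case: Fb => _ [y Eb]; subst b; rewrite comp_idc_l // cats0.
case: Fa Fb => [Na [Ha Ea]] [Nb [Hb Eb]]; split.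
  by move=> x; rewrite mem_cat => /orP[/Na|/Nb].
have [Esa Eta] := src_tgt_composite Ha; have [Esb Etb] := src_tgt_composite Hb.
rewrite Ea in Esa Eta; rewrite Eb in Esb Etb.
split; first by apply: chain_cat => //; rewrite -Eta -Esb.
rewrite /= /composite foldl_cat /= -!/(composite _ _) composite_comp //.
  by rewrite Ea Eb.
by rewrite -Ea in Eab; rewrite Eab Esb.
Qed.

Lemma len_le_leq f m n : len_le f m -> (m <= n)%N -> len_le f n.
Proof. by move=> Hm Hmn s /Hm /leq_trans; apply. Qed.

Lemma len_eq_inj f i j : len_eq f i -> len_eq f j -> i = j.
Proof.
move=> [Hi [s [Fs Es]]] [Hj [t [Ft Et]]].
by have := Hi _ Ft; have := Hj _ Fs; lia.
Qed.

Lemma len_eq_leq f m n : len_eq f m -> len_le f n -> (m <= n)%N.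
Proof. by move=> [_ [s [Fs <-]]] /(_ s Fs). Qed.

Lemma len_eq_le_comp a b i n : tgt a = src b -> len_eq a i ->
  len_le (comp b a) n -> (i <= n)%N /\ len_le b (n - i).
Proof.
move=> Eab [_ [sa [Fa <-]]] Hn; split.
  have [sb Fb] := exists_factorisation b.
  by have := Hn _ (factorisation_cat Fa Fb Eab); rewrite size_cat; lia.
by move=> sb Fb; have := Hn _ (factorisation_cat Fa Fb Eab); rewrite size_cat; lia.
Qed.

End Factorisations.

Section Moebius.
Variables (C : category) (HC : moebius C).
Implicit Types (x : Obj C) (a b f : Arr C) (s : seq (Arr C)).

Lemma factorisation_size_bounded f :
  exists B, forall s, factorisation f s -> (size s <= B)%N.
Proof.
have [L HL] := HC f; exists (\max_(s <- L) size s) => s /HL Ls.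
exact: (leq_bigmax_seq _ Ls).
Qed.

(* A non-empty factorisation of an identity could be repeated indefinitely. *)
Lemma factorisation_idc x s : factorisation (idc x) s -> s = [::].
Proof.
case: s => // a t Fat; exfalso.
have [B HB] := factorisation_size_bounded (idc x).
have long m : exists s, factorisation (idc x) s /\ (m < size s)%N.
  elim: m => [|m [s [Fs Hm]]]; first by exists (a :: t).
  exists ((a :: t) ++ s); split; last by rewrite size_cat /=; lia.
  by rewrite -comp_idcc; apply: factorisation_cat; rewrite ?tgt_id ?src_id.
by have [s [/HB]] := long B; rewrite ltnNge => ->.
Qed.

Lemma len_eq0 f : len_eq f 0 <-> is_id f.
Proof.
split=> [[_ [s [Fs /eqP]]]|If].
  by rewrite size_eq0 => /eqP Es; case: Fs; rewrite Es.
split; last by exists [::]; split; first exact: factorisation_nil.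
by case: If => x -> s /factorisation_idc ->.
Qed.

Lemma len_le0 f : len_le f 0 <-> is_id f.
Proof.
split=> [Hf|/len_eq0[] //].
by apply: contrapT => /factorisation1/Hf.
Qed.

Lemma exists_len_eq f : exists n, len_eq f n.
Proof.
pose P n := `[< exists s, factorisation f s /\ size s = n >].
have exP : exists n, P n.
  by have [s Fs] := exists_factorisation f; exists (size s); apply/asboolP; exists s.
have [B HB] := factorisation_size_bounded f.
have ubP i : P i -> (i <= B)%N by move=> /asboolP [s [/HB + <-]].
case: (ex_maxnP exP ubP) => n /asboolP Pn maxn_n; exists n; split=> // s Fs.
by apply: maxn_n; apply/asboolP; exists s.
Qed.

Lemma comp_eq_idc a b x : tgt a = src b -> comp b a = idc x ->
  a = idc x /\ b = idc x.
Proof.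
move=> Eab Ex.
have [sa Fa] := exists_factorisation a; have [sb Fb] := exists_factorisation b.
have := factorisation_cat Fa Fb Eab; rewrite Ex => /factorisation_idc.
move=> /(congr1 size)/eqP; rewrite size_cat addn_eq0 !size_eq0 => /andP[/eqP Ea /eqP Eb].
subst sa sb.
case: Fa Fb => _ [y Ey] [_ [z Ez]]; subst a b.
rewrite tgt_id src_id in Eab; subst z.
by rewrite comp_idcc in Ex; rewrite Ex.
Qed.

Lemma exists_len_le_seq (r : seq (Arr C)) :
  exists n, forall f, f \in r -> len_le f n.
Proof.
elim: r => [|f r [n Hn]]; first by exists 0%N.
have [m [Hm _]] := exists_len_eq f.
exists (maxn m n) => g; rewrite inE => /orP[/eqP ->|/Hn Hg].
  by apply: len_le_leq Hm _; rewrite leq_maxl.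
by apply: len_le_leq Hg _; rewrite leq_maxr.
Qed.

Lemma comp_eq_finite f : exists S : seq (Arr C * Arr C),
  forall a b, tgt a = src b -> comp b a = f -> (a, b) \in S.
Proof.
have [L HL] := HC f.
exists [:: (idc (src f), f), (f, idc (tgt f)) & [seq (nth f s 0, nth f s 1) | s <- L]].
move=> a b Eab Ef; rewrite !inE.
have [[y Ea]|Na] := pselect (is_id a).
  by subst a; rewrite comp_idc_r // in Ef; subst f; rewrite -Eab tgt_id eqxx.
have [[y Eb]|Nb] := pselect (is_id b).
  by subst b; rewrite comp_idc_l // in Ef; subst f; rewrite Eab src_id eqxx orbT.
have := factorisation_cat (factorisation1 Na) (factorisation1 Nb) Eab.
by rewrite Ef => /HL/(map_f (fun s => (nth f s 0, nth f s 1))) ->; rewrite !orbT.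
Qed.

Lemma comp_in_seq_finite (r : seq (Arr C)) : exists S : seq (Arr C * Arr C),
  forall a b, tgt a = src b -> comp b a \in r -> (a, b) \in S.
Proof.
elim: r => [|f r [S HS]]; first by exists [::].
have [Sf HSf] := comp_eq_finite f.
exists (Sf ++ S) => a b Eab; rewrite inE mem_cat => /orP[/eqP/(HSf _ _ Eab) ->//|].
by move=> /(HS _ _ Eab) ->; rewrite orbT.
Qed.

Lemma len_eq_of_le f n : len_le f n -> ~ len_le f n.-1 -> len_eq f n.
Proof.
move=> Hn Nn; have [m Hm] := exists_len_eq f.
have mn := len_eq_leq Hm Hn.
have nm : ~~ (m <= n.-1)%N by apply/negP => /(len_le_leq (proj1 Hm)).
by have -> : n = m by lia.
Qed.

End Moebius.

Definition fsfun_on (T : choiceType) (V : nmodType) (S : seq T) (g : T -> V)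
  : {fsfun T -> V with 0} := [fsfun x in seq_fset tt S => g x].

Lemma fsfun_onE (T : choiceType) (V : nmodType) (S : seq T) (g : T -> V) :
  (forall x, g x != 0 -> x \in S) -> forall x, fsfun_on S g x = g x.
Proof.
move=> gS x; rewrite fsfun_fun seq_fsetE.
by case: ifPn => // xS; apply/esym/eqP; apply: contraNT xS; apply: gS.
Qed.

Section IncidenceCoalgebra.
Variables (k : fieldType) (C : category) (HC : moebius C).
Implicit Types (x : Obj C) (a b f : Arr C) (v : vec C k).

Lemma exists_inCle v : exists n, inCle v n.
Proof.
have [n Hn] := exists_len_le_seq HC (finsupp v).
by exists n => f vf; apply: Hn; rewrite mem_finsupp.
Qed.

Lemma inCleS v n : inCle v n -> inCle v n.+1.
Proof. by move=> Hv f /Hv /len_le_leq; apply. Qed.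

Lemma Delta_finite_support v :
  exists S : seq (Arr C * Arr C), forall p, Delta v p != 0 -> p \in S.
Proof.
have [S HS] := comp_in_seq_finite HC (finsupp v).
exists S => -[a b]; rewrite /Delta /=.
by case: asboolP => [Eab vab|_]; [apply: HS; rewrite ?mem_finsupp | rewrite eqxx].
Qed.

(* The (i, n - i) part of [Delta v] keeps the pairs (a, b) with l(a) = i. *)
Lemma Delta_inCle n v : inCle v n ->
  exists w : 'I_n.+1 -> vec2 C k,
    (forall (i : 'I_n.+1) p, w i p != 0 -> len_le p.1 i /\ len_le p.2 (n - i)) /\
    (forall p, Delta v p = \sum_(i < n.+1) w i p).
Proof.
move=> Hv; have [S HS] := Delta_finite_support v.
pose g i p := if `[< len_eq p.1 i >] then Delta v p else 0.
have gS i p : g i p != 0 -> p \in S by rewrite /g; case: ifP => [_ /HS|_ /eqP].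
exists (fun i => fsfun_on S (g i)); split=> [i [a b]|[a b]].
  rewrite fsfun_onE ?/g /Delta /=; last exact: gS.
  case: asboolP => [Ha|_]; last by rewrite eqxx.
  case: asboolP => [Eab /Hv Hab|_]; last by rewrite eqxx.
  by split; [case: Ha | case: (len_eq_le_comp Eab Ha Hab)].
rewrite (eq_bigr (fun i : 'I_n.+1 => g i (a, b))) => [|i _]; last first.
  by rewrite fsfun_onE; last exact: gS.
have [Dab|] := eqVneq (Delta v (a, b)) 0.
  by rewrite Dab big1 // => i _; rewrite /g Dab if_same.
rewrite /Delta /=; case: asboolP => [Eab /Hv Hab|_]; last by rewrite eqxx.
have [m Hm] := exists_len_eq HC a.
have [mn _] := len_eq_le_comp Eab Hm Hab; rewrite -ltnS in mn.
rewrite (bigD1 (Ordinal mn)) //= big1 ?addr0 => [|i /negP ni].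
  by rewrite /g /Delta /= !asboolT.
rewrite /g; case: asboolP => // Hi; exfalso; apply: ni.
by apply/eqP/val_inj; exact: len_eq_inj Hi Hm.
Qed.

Lemma inCle_decomposition n v : (0 < n)%N -> inCle v n <->
  exists u w : vec C k, inCle u n.-1 /\ inCeq w n /\ forall f, v f = u f + w f.
Proof.
move=> n0; split=> [Hv|[u [w [Hu [Hw Ev]]]] f]; last first.
  rewrite Ev; have [u0|/Hu Hf _] := eqVneq (u f) 0.
    by rewrite u0 add0r => /Hw [].
  exact: len_le_leq Hf (leq_pred n).
pose low f := `[< len_le f n.-1 >].
have vS (b : bool) f : (if b then v f else 0) != 0 -> f \in finsupp v.
  by case: b; rewrite ?eqxx // mem_finsupp.
exists (fsfun_on (finsupp v) (fun f => if low f then v f else 0)).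
exists (fsfun_on (finsupp v) (fun f => if ~~ low f then v f else 0)).
split; [|split] => f; rewrite !fsfun_onE ?/low; try by move=> ?; apply: vS.
all: case: (asboolP (len_le f n.-1)) => //= Nf; rewrite ?eqxx ?addr0 ?add0r //.
by move=> /Hv Hf; exact (len_eq_of_le HC Hf Nf).
Qed.

Lemma inCle_inCeq_eq0 n v : (0 < n)%N -> inCle v n.-1 -> inCeq v n ->
  forall f, v f = 0.
Proof.
move=> n0 Hv Hw f; apply/eqP; apply: contraT => vf.
by have := len_eq_leq (Hw _ vf) (Hv _ vf); lia.
Qed.

Lemma eps_inCeq n v : (0 < n)%N -> inCeq v n -> eps v = 0.
Proof.
move=> n0 Hv; rewrite /eps big_seq big1 // => f; rewrite mem_finsupp => /Hv Hf.
case: asboolP => [/(len_eq0 HC) If|_]; last by rewrite mulr0.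
by move: n0; rewrite (len_eq_inj Hf If).
Qed.

Lemma inCle0 v : inCle v 0 <-> forall f, v f != 0 -> is_id f.
Proof. by split=> Hv f /Hv /(len_le0 HC). Qed.

Lemma basis_neq0 f : basis k f <> (fun _ => 0).
Proof. by move=> /(congr1 (fun g => g f)) /eqP; rewrite /basis eqxx oner_eq0. Qed.

Lemma Delta_basis_idc x :
  Delta (basis k (idc x)) = fun p => basis k (idc x) p.1 * basis k (idc x) p.2.
Proof.
apply: funext => -[a b]; rewrite /Delta /basis /=.
case: (eqVneq a (idc x)) => [->|Na]; case: (eqVneq b (idc x)) => [->|Nb];
  rewrite ?mulr1 ?mulr0 ?mul0r.
- by rewrite asboolT ?comp_idcc ?eqxx // tgt_id src_id.
all: case: asboolP => // Eab; case: eqP => // /(comp_eq_idc HC Eab) [Ea Eb].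
all: by [rewrite Ea eqxx in Na | rewrite Eb eqxx in Nb].
Qed.

Lemma proj0_Delta_basis f n : len_eq f n ->
  proj 0 n (Delta (basis k f)) = fun p => basis k (idc (src f)) p.1 * basis k f p.2.
Proof.
move=> Hf; apply: funext => -[a b]; rewrite /proj /Delta /basis /=.
case: asboolP => [[/(len_eq0 HC) [y ->] _]|Nab].
  case: asboolP => [|Nyb]; first rewrite tgt_id => ->.
    by rewrite comp_id_r; case: eqP => [->|_]; rewrite ?eqxx ?mulr1 ?mulr0.
  case: eqP => [Ey|_]; case: eqP => [Eb|_]; rewrite ?mulr0 ?mul0r //.
  by rewrite Ey Eb tgt_id in Nyb.
case: eqP => [Ea|_]; case: eqP => [Eb|_]; rewrite ?mulr0 ?mul0r //.
by case: Nab; rewrite Ea Eb; split=> //; apply/(len_eq0 HC); exists (src f).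
Qed.

Lemma projn0_Delta_basis f n : len_eq f n ->
  proj n 0 (Delta (basis k f)) = fun p => basis k f p.1 * basis k (idc (tgt f)) p.2.
Proof.
move=> Hf; apply: funext => -[a b]; rewrite /proj /Delta /basis /=.
case: asboolP => [[_ /(len_eq0 HC) [y ->]]|Nab].
  case: asboolP => [|Nay]; first rewrite src_id => <-.
    by rewrite comp_id_l; case: eqP => [->|_]; rewrite ?eqxx ?mul1r ?mul0r.
  case: eqP => [Ea|_]; case: eqP => [Ey|_]; rewrite ?mulr0 ?mul0r //.
  by rewrite Ey Ea src_id in Nay.
case: eqP => [Ea|_]; case: eqP => [Eb|_]; rewrite ?mulr0 ?mul0r //.
by case: Nab; rewrite Ea Eb; split=> //; apply/(len_eq0 HC); exists (tgt f).
Qed.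

End IncidenceCoalgebra.

Theorem proposition6p3 (k : fieldType) (C : category) (HC : moebius C) :
  (* the C_n exhaust C *)
  (forall v : vec C k, exists n, inCle v n) /\
  (* C_0 \subset C_1 \subset ... *)
  (forall (v : vec C k) n, inCle v n -> inCle v n.+1) /\
  (* Delta(C_n) \subset sum_{i+j=n} C_i (x) C_j *)
  (forall (n : nat) (v : vec C k), inCle v n ->
     exists w : 'I_n.+1 -> vec2 C k,
       (forall (i : 'I_n.+1) (p : (Arr C * Arr C)%type), w i p != 0 ->
          len_le p.1 i /\ len_le p.2 (n - i)) /\
       (forall p, Delta v p = \sum_(i < n.+1) w i p)) /\
  (* C_n = C_{n-1} (+) C(n) for n >= 1 *)
  (forall n : nat, (0 < n)%N ->
     (forall v : vec C k, inCle v n <->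
        exists u w : vec C k, inCle u n.-1 /\ inCeq w n /\ forall f, v f = u f + w f) /\
     (forall v : vec C k, inCle v n.-1 -> inCeq v n -> forall f, v f = 0)) /\
  (* C(n) \subset Ker eps for n >= 1 *)
  (forall (n : nat) (v : vec C k), (0 < n)%N -> inCeq v n -> eps v = 0) /\
  (* C_0 is spanned by the identity arrows *)
  (forall v : vec C k, inCle v 0 <-> forall f, v f != 0 -> is_id f) /\
  (* identity arrows are group-like *)
  (forall x : Obj C,
     basis k (idc x) <> (fun _ => 0) /\
     Delta (basis k (idc x)) = (fun p => basis k (idc x) p.1 * basis k (idc x) p.2)) /\
  (* (0,n)- and (n,0)-components of Delta(f) for f : x -> y with l(f) = n *)
  (forall (f : Arr C) (n : nat), len_eq f n ->
     proj 0 n (Delta (basis k f)) = (fun p => basis k (idc (src f)) p.1 * basis k f p.2) /\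
     proj n 0 (Delta (basis k f)) = (fun p => basis k f p.1 * basis k (idc (tgt f)) p.2)).
Proof.
split; first exact: exists_inCle.
split; first exact: inCleS.
split; first exact: Delta_inCle.
split.
  move=> n n0; split=> v; first exact: inCle_decomposition.
  exact: inCle_inCeq_eq0.
split; first exact: eps_inCeq.
split; first exact: inCle0.
split; first by move=> x; split; [exact: basis_neq0 | exact: Delta_basis_idc].
by move=> f n Hf; split; [exact: proj0_Delta_basis | exact: projn0_Delta_basis].
Qed.
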